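(* Let $X\subseteq\mathbb{R}^d$ be a finite set of base points and let $DG$ be the Delaunay graph constructed on $X$. If any single edge $\{u,v\}$ is removed from $DG$ (giving a graph $G'$), then there exists a query $q\in\mathbb{R}^d$ such that the $2$-Neighboring Graph $NG_{2,q}$ of $q$ in $G'$ consists of two isolated vertices (i.e., has no edges).
   Context: Delaunay graph $DG$ on $X$: two points $u,v\in X$ are joined by an edge if and only if there exists a sphere passing through $u$ and $v$ with no other point of $X$ inside it; as a graph index, each undirected edge is treated as a pair of directed edges in both directions, and removing the edge removes both directions. For a query $q$, $N_{i,q}$ denotes the $i$-th nearest neighbour of $q$ in $X$ (with respect to the distance $\delta$). For a directed graph $G=(V,E)$ on $X$, $NG_{S,q}$ is the subgraph of $G$ induced by $\{N_{1,q},\dots,N_{S,q}\}$. *)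

From HB Require Import structures.
From mathcomp Require Import all_boot all_order all_algebra.
From mathcomp Require Import reals.
From mathcomp Require Import finmap.
Set Implicit Arguments. Unset Strict Implicit. Unset Printing Implicit Defensive.
Import Order.TTheory GRing.Theory Num.Theory.
Local Open Scope ring_scope.
Local Open Scope fset_scope.

Section Delaunay.
Variables (R : realType) (d : nat).
Notation pt := 'rV[R]_d.

Definition delta (x y : pt) : R :=
  Num.sqrt (\sum_(i < d) (x ord0 i - y ord0 i) ^+ 2).

(* Delaunay graph DG on X (as a symmetric directed relation): u,v in X,
   distinct, and some sphere (centre c, radius r) passes through u and v
   with no other point of X strictly inside it. *)
Definition delaunay_edge (X : {fset pt}) (u v : pt) : Prop :=
  [/\ u \in X, v \in X, u != v &
      exists (c : pt) (r : R),
        [/\ delta c u = r, delta c v = r &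
            forall w, w \in X -> w != u -> w != v -> ~ (delta c w < r)]].

Definition remove_edge (E : pt -> pt -> Prop) (u v : pt) : pt -> pt -> Prop :=
  fun a b => E a b /\ ~ ((a = u /\ b = v) \/ (a = v /\ b = u)).

(* s is an ordering N_{1,q}, N_{2,q}, ... of X by nondecreasing distance
   to q (ties broken arbitrarily). *)
Definition nn_order (X : {fset pt}) (q : pt) (s : seq pt) : Prop :=
  uniq s /\ s =i X /\ sorted (fun a b => delta q a <= delta q b) s.

Definition NG_no_edges (G : pt -> pt -> Prop) (S : nat) (s : seq pt) : Prop :=
  forall a b, a \in take S s -> b \in take S s -> ~ G a b.

End Delaunay.

(* The centre c of an empty sphere through u and v is a query whose two
   nearest neighbours are u and v: every other point of X lies at distance at
   least the radius from c.  The only possible edge of NG_{2,c} is then {u,v},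
   which has been removed from G'. *)
From HB Require Import structures.
From mathcomp Require Import all_boot all_order all_algebra.
From mathcomp Require Import reals.
From mathcomp Require Import finmap.
Set Implicit Arguments. Unset Strict Implicit. Unset Printing Implicit Defensive.
Local Open Scope ring_scope.
Local Open Scope fset_scope.
Import Order.TTheory GRing.Theory Num.Theory.

Section NearestNeighbours.
Variables (R : realType) (d : nat).
Implicit Types (X : {fset 'rV[R]_d}) (q : 'rV[R]_d) (p : seq 'rV[R]_d).

Lemma nn_order_prefix X q p :
    uniq p -> {subset p <= X} -> sorted (fun a b => delta q a <= delta q b) p ->
    (forall a w, a \in p -> w \in X -> w \notin p -> delta q a <= delta q w) ->
  exists s, nn_order X q s /\ take (size p) s = p.
Proof.
move=> p_uniq pX p_sorted p_nearest.
pose leT a b := delta q a <= delta q b.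
have leT_total : total leT by move=> a b; apply: le_total.
have leT_trans : transitive leT by move=> b a c; apply: le_trans.
pose rest := sort leT [seq w <- enum_fset X | w \notin p].
exists (p ++ rest); split; last exact: take_size_cat.
split; [|split].
- rewrite cat_uniq p_uniq sort_uniq filter_uniq ?fset_uniq //= andbT.
  by apply/hasPn => w; rewrite mem_sort mem_filter => /andP[].
- move=> w; rewrite mem_cat mem_sort mem_filter.
  by case: (boolP (w \in p)) => [/pX ->|_] //=.
- rewrite sorted_pairwise // pairwise_cat -!sorted_pairwise // p_sorted.
  rewrite (sort_sorted leT_total) !andbT; apply/allrelP => a w ap.
  by rewrite mem_sort mem_filter => /andP[wp wX]; apply: p_nearest.
Qed.

Lemma NG_no_edges_remove_edge (E : 'rV[R]_d -> 'rV[R]_d -> Prop) u v s :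
    (forall a, ~ E a a) -> take 2 s = [:: u; v] ->
  NG_no_edges (remove_edge E u v) 2 s.
Proof.
move=> E_irr take_s a b; rewrite take_s !inE.
move=> /orP[] /eqP-> /orP[] /eqP-> [Eab not_uv];
  by [apply: E_irr Eab | apply: not_uv; left | apply: not_uv; right].
Qed.

Lemma delaunay_edge_irrefl X a : ~ delaunay_edge X a a.
Proof. by case; rewrite eqxx. Qed.

End NearestNeighbours.

Theorem theorem4p3 (R : realType) (d : nat) (X : {fset 'rV[R]_d})
    (u v : 'rV[R]_d) (huv : delaunay_edge X u v) :
  exists (q : 'rV[R]_d) (s : seq 'rV[R]_d),
    nn_order X q s /\
    NG_no_edges (remove_edge (delaunay_edge X) u v) 2 s.
Proof.
case: (huv) => uX vX uv [c [r [cu cv c_empty]]].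
have [s [s_nn take_s]] : exists s, nn_order X c s /\ take 2 s = [:: u; v].
  apply: (nn_order_prefix (p := [:: u; v])) => /=.
  - by rewrite inE uv.
  - by move=> w; rewrite !inE => /orP[] /eqP->.
  - by rewrite cu cv lexx.
  move=> a w; rewrite !inE => /orP[] /eqP-> wX; rewrite negb_or => /andP[wu wv];
    by rewrite ?cu ?cv leNgt; apply/negP/c_empty.
exists c, s; split=> //.
exact: NG_no_edges_remove_edge (@delaunay_edge_irrefl _ _ X) take_s.
Qed.
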